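(* Let $n\ge5$ be odd and $M$ an $n\times n$ HW-matrix. There is no spin$^c$ set $S$ for $M$ with $|S|=n-2$.
   Context: $\mathcal S=\{0,1,2,3\}$ is the Klein four-group ($\mathbb Z_2$-vector space) with $x+x=0$, $1+2=3$, $1+3=2$, $2+3=1$. $\mathcal P_n$ is the power set of $\{1,\dots,n\}$ (addition = symmetric difference, product = intersection); $|U|_2=|U|\bmod 2$; $J_M(U)=\{j:\sum_{i\in U}M_{ij}=1\}$. $M$ is an HW-matrix if it has $1$ on the diagonal and $2$ or $3$ off the diagonal, all column sums are $0$, and $J_M(U)\ne\emptyset$ for all $U\ne\emptyset,\{1,\dots,n\}$. $S\in\mathcal P_n$ is a spin$^c$ set for $M$ if $|(J_M(U)+U)\cap S|_2=\binom{|U|}2\bmod 2$ for all $U\in\mathcal P_n$. *)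

From mathcomp Require Import all_boot all_order all_algebra.
Set Implicit Arguments. Unset Strict Implicit. Unset Printing Implicit Defensive.
Import GRing.Theory.
Local Open Scope ring_scope.

(* The Klein four-group S = {0,1,2,3}, realized as F_2 x F_2 with
   0 = (0,0), 1 = (1,0), 2 = (0,1), 3 = (1,1); so x+x = 0, 1+2 = 3, 1+3 = 2, 2+3 = 1. *)
Definition K4 : Type := ('F_2 * 'F_2)%type.
Definition k0 : K4 := (0, 0).
Definition k1 : K4 := (1, 0).
Definition k2 : K4 := (0, 1).
Definition k3 : K4 := (1, 1).

Definition symdiff (n : nat) (A B : {set 'I_n}) : {set 'I_n} :=
  (A :\: B) :|: (B :\: A).

Definition JM (n : nat) (M : 'M[K4]_n) (U : {set 'I_n}) : {set 'I_n} :=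
  [set j | \sum_(i in U) M i j == k1].

Definition is_HW (n : nat) (M : 'M[K4]_n) : Prop :=
  [/\ (forall i, M i i = k1),
      (forall i j, i != j -> M i j = k2 \/ M i j = k3),
      (forall j, \sum_i M i j = k0) &
      (forall U : {set 'I_n}, U != set0 -> U != setT -> JM M U != set0)].

Definition spinc_set (n : nat) (M : 'M[K4]_n) (S : {set 'I_n}) : Prop :=
  forall U : {set 'I_n},
    odd #|symdiff (JM M U) U :&: S| = odd 'C(#|U|, 2).

(* Write the entries of M as M_ij = (a_ij, [i != j]) in F_2 x F_2 (the Klein
   group), and for a candidate spin^c set S put w_i = sum_(j in S) a_ij.
   1. The spin^c condition for a two-element set U = {i, k} inside S reads
      a_ik + a_ki + w_i + w_k = 1 ([pair_relation]).
   2. Hence "i beats j iff a_ij + w_j = 1" is a tournament on S, and every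
      vertex of S has out-degree congruent to 1 + sum_(j in S) w_j mod 2.
   3. A tournament on at least two vertices whose out-degrees all have the
      same parity contains a directed 3-cycle: otherwise it has a sink s, and
      S minus s has a sink t whose only out-neighbour is s
      ([triangle_of_parity]).
   4. For a 3-cycle U = {x, y, z} in S we get J_M(U) = set0: off U the second
      coordinate of the column sum is 1, on U the first one vanishes.  As
      |U| = 3 < n, this contradicts the defining property of HW-matrices.
   The argument only needs n >= 4 and |S| >= 2. *)

From mathcomp Require Import all_boot all_order all_algebra zify.
Set Implicit Arguments. Unset Strict Implicit.
Import GRing.Theory.

Section Tournament.
Variables (T : finType) (r : rel T).

Definition out_nbrs (B : {set T}) (x : T) : {set T} :=
  [set z in B | (z != x) && r x z].

Definition tournament (B : {set T}) : Prop :=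
  {in B &, forall x y, x != y -> r x y = ~~ r y x}.

Definition is_triangle (x y z : T) : bool :=
  [&& x != y, y != z, z != x & [&& r x y, r y z & r z x]].

Definition triangle_free (B : {set T}) : bool :=
  [forall x in B, forall y in B, forall z in B, ~~ is_triangle x y z].

Lemma no_triangle (B : {set T}) x y z :
  triangle_free B -> x \in B -> y \in B -> z \in B ->
  x != y -> y != z -> z != x -> r x y -> r y z -> r z x -> False.
Proof.
move=> /forall_inP freeB xB yB zB xy yz zx rxy ryz rzx.
move: (freeB x xB) => /forall_inP /(_ y yB) /forall_inP /(_ z zB).
by rewrite /is_triangle xy yz zx rxy ryz rzx.
Qed.

Lemma tournament_sub (A B : {set T}) :
  B \subset A -> tournament A -> tournament B.
Proof. by move=> /subsetP sBA tourA x y /sBA xA /sBA yA; apply: tourA. Qed.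

Lemma triangle_free_sub (A B : {set T}) :
  B \subset A -> triangle_free A -> triangle_free B.
Proof.
move=> /subsetP sBA /forall_inP freeA; apply/forall_inP => x /sBA /freeA.
move=> /forall_inP freeAx; apply/forall_inP => y /sBA /freeAx.
by move=> /forall_inP freeAxy; apply/forall_inP => z /sBA /freeAxy.
Qed.

(* In a triangle-free tournament, whatever [z] beats is also beaten by any
   [y] beating [z]; so moving along an edge strictly lowers the out-degree. *)
Lemma out_nbrs_shrink (B : {set T}) y z :
  tournament B -> triangle_free B -> y \in B -> z \in out_nbrs B y ->
  #|out_nbrs B z| < #|out_nbrs B y|.
Proof.
move=> tourB freeB yB zout; move: (zout); rewrite inE => /and3P [zB zy ryz].
have sub : out_nbrs B z \subset out_nbrs B y :\ z.
  apply/subsetP => w; rewrite !inE => /and3P [wB wz rzw]; rewrite wz wB /=.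
  have wy : w != y.
    by apply: contraTneq rzw => ->; rewrite (tourB z y) // ryz.
  rewrite wy /=; apply: contraT => nryw.
  have rwy : r w y by rewrite (tourB w y) // nryw.
  by case: (no_triangle freeB yB zB wB _ _ wy ryz rzw rwy); rewrite eq_sym.
by rewrite (cardsD1 z (out_nbrs B y)) zout add1n ltnS subset_leq_card.
Qed.

(* A vertex of minimal out-degree of a nonempty triangle-free tournament is
   a sink. *)
Lemma sink_exists (B : {set T}) :
  tournament B -> triangle_free B -> B != set0 ->
  exists2 s, s \in B & out_nbrs B s = set0.
Proof.
move=> tourB freeB /set0Pn [b bB].
case: (arg_minnP (fun s => #|out_nbrs B s|) bB) => s sB smin.
exists s => //; apply/eqP; rewrite -subset0; apply/subsetP => z zout.
have zB : z \in B by move: zout; rewrite inE => /andP [].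
by have := out_nbrs_shrink tourB freeB sB zout; rewrite ltnNge smin.
Qed.

(* A tournament on at least two vertices in which all out-degrees have the
   same parity contains a directed 3-cycle: otherwise a sink [s] has
   out-degree 0, while a sink [t] of the rest has out-degree 1. *)
Lemma triangle_of_parity (A : {set T}) :
  tournament A -> 1 < #|A| ->
  {in A &, forall x y, odd #|out_nbrs A x| = odd #|out_nbrs A y|} ->
  ~~ triangle_free A.
Proof.
move=> tourA A2 parA; apply/negP => freeA.
have [s sA outs] : exists2 s, s \in A & out_nbrs A s = set0.
  by apply: sink_exists; rewrite // -card_gt0 ltnW.
have sAs : A :\ s \subset A by apply: subsetDl.
have [t /setD1P [ts tA] outt] :
    exists2 t, t \in A :\ s & out_nbrs (A :\ s) t = set0.
  apply: sink_exists.
  - exact: tournament_sub sAs tourA.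
  - exact: triangle_free_sub sAs freeA.
  - by rewrite -card_gt0 -(ltn_add2l (s \in A)) -cardsD1 sA.
suff outt1 : out_nbrs A t = [set s].
  by have := parA s t sA tA; rewrite outs outt1 cards0 cards1.
apply/setP => z; rewrite !inE; have [-> | zs] := eqVneq z s.
  rewrite sA eq_sym ts (tourA t s) //; apply/negP => rst.
  by have := in_set0 t; rewrite -outs !inE tA ts rst.
apply/negP => /and3P [zA zt rtz].
by have := in_set0 z; rewrite -outt !inE zs zA zt rtz.
Qed.

End Tournament.

Lemma card_set3 (T : finType) (x y z : T) :
  x != y -> y != z -> z != x -> #|[set x; y; z]| = 3.
Proof.
by move=> xy yz zx; rewrite -setUA cardsU1 cards2 !inE negb_or xy yz eq_sym zx.
Qed.

Lemma set3_rot (T : finType) (x y z : T) : [set x; y; z] = [set z; x; y].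
Proof. by apply/setP => t; rewrite !inE orbC orbA. Qed.

Local Open Scope ring_scope.

Lemma F2_cases (x : 'F_2) : x = 0 \/ x = 1.
Proof. by case: x => [[|[|m]] // Hm]; [left | right]; apply: val_inj. Qed.

Lemma addF2K (x : 'F_2) : x + x = 0.
Proof. exact/addrr_pchar2/pchar_Fp. Qed.

Lemma natr_F2 m : (m%:R : 'F_2) = (odd m)%:R.
Proof. by rewrite -(Fp_nat_mod (p := 2)) ?modn2. Qed.

Lemma odd_F2 m k : (m%:R : 'F_2) = k%:R -> odd m = odd k.
Proof.
by rewrite (natr_F2 m) (natr_F2 k); case: (odd m); case: (odd k) => // /eqP.
Qed.

Lemma F2_sum1 (u v : 'F_2) : u + v = 1 -> (u == 1) = ~~ (v == 1).
Proof. by case: (F2_cases u) => ->; case: (F2_cases v) => ->. Qed.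

Lemma card_ones (T : finType) (X : {set T}) (f : T -> 'F_2) :
  (#|[set x in X | f x == 1]|%:R : 'F_2) = \sum_(x in X) f x.
Proof.
rewrite -sum1dep_card natr_sum big_mkcondr /=.
by apply: eq_bigr => x _; case: (F2_cases (f x)) => ->.
Qed.

Lemma card_symdiff_F2 (m : nat) (A B C : {set 'I_m}) :
  (#|symdiff A B :&: C|%:R : 'F_2) = #|A :&: C|%:R + #|B :&: C|%:R.
Proof.
have indicator (D : {set 'I_m}) :
    D :&: C = [set x in C | (x \in D)%:R == 1 :> 'F_2].
  by apply/setP => x; rewrite !inE andbC; case: (x \in D).
rewrite !indicator !card_ones -big_split /=; apply: eq_bigr => x _.
by rewrite !inE; case: (x \in A); case: (x \in B); rewrite /= ?addF2K ?addr0 ?add0r.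
Qed.

Section SpinSets.
Variables (n : nat) (M : 'M[K4]_n).
Hypotheses (M_diag : forall i, M i i = k1)
  (M_offdiag : forall i j, i != j -> M i j = k2 \/ M i j = k3).

Definition coef (i j : 'I_n) : 'F_2 := (M i j).1.

Lemma M_entry i j : M i j = (coef i j, (i != j)%:R).
Proof.
have [-> | ij] := eqVneq i j; first by rewrite /coef M_diag.
by rewrite /coef; case: (M_offdiag ij) => ->.
Qed.

Lemma coef_diag i : coef i i = 1.
Proof. by rewrite /coef M_diag. Qed.

Lemma col_sum (U : {set 'I_n}) j :
  \sum_(i in U) M i j = (\sum_(i in U) coef i j, #|U :\ j|%:R).
Proof.
rewrite [LHS]surjective_pairing !raddf_sum /=; congr pair.
have -> : U :\ j = [set i in U | (i != j)%:R == 1 :> 'F_2].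
  by apply/setP => i; rewrite !inE andbC; case: (i != j).
by rewrite card_ones; apply: eq_bigr => i _; rewrite M_entry.
Qed.

Lemma in_JM (U : {set 'I_n}) j :
  (j \in JM M U) = (\sum_(i in U) coef i j == 1) && ~~ odd #|U :\ j|.
Proof. by rewrite inE col_sum xpair_eqE natr_F2; case: odd. Qed.

Variable S : {set 'I_n}.
Hypothesis spinS : spinc_set M S.

Definition weight i := \sum_(j in S) coef i j.

(* The spin^c condition for U = {i, k}: here J_M(U) is disjoint from U and
   consists of the j outside U with a_ij + a_kj = 1. *)
Lemma pair_relation i k : i \in S -> k \in S -> i != k ->
  coef i k + coef k i + weight i + weight k = 1.
Proof.
move=> iS kS ik; set U := [set i; k].
have cardU : #|U| = 2%N by rewrite cards2 ik.
have US : U \subset S by rewrite subUset !sub1set iS kS.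
have JS : JM M U :&: S = [set j in S :\: U | coef i j + coef k j == 1].
  apply/setP => j; rewrite in_setI in_JM [in RHS]inE in_setD.
  have := cardsD1 j U; rewrite cardU.
  case: (boolP (j \in U)) => jU /=.
    by rewrite add1n => -[<-]; rewrite andbF.
  rewrite add0n => <- /=; rewrite big_setU1 ?big_set1 ?inE //.
  by rewrite andbT andbC.
have sumU : \sum_(j in U) (coef i j + coef k j) = coef k i + coef i k.
  rewrite big_setU1 ?big_set1 ?inE //= !coef_diag.
  by rewrite [coef i k + 1]addrC addrACA addF2K add0r.
have := spinS U; rewrite cardU binn => /(congr1 (fun b : bool => b%:R : 'F_2)).
rewrite -natr_F2 card_symdiff_F2 (setIidPl US) cardU (natr_F2 2) addr0.
rewrite JS card_ones => sumSU.
have : \sum_(j in S) (coef i j + coef k j) = weight i + weight k.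
  exact: big_split.
rewrite (big_setID U) /= (setIidPr US) sumU sumSU => sumS.
by rewrite -addrA -sumS /= [coef k i + _]addrC addrA addF2K add0r.
Qed.

Definition edge_bit i j := coef i j + weight j.
Definition beats : rel 'I_n := fun i j => edge_bit i j == 1.

Lemma coef_edge i j : coef i j = edge_bit i j + weight j.
Proof. by rewrite /edge_bit -addrA addF2K addr0. Qed.

Lemma beats_tournament : tournament beats S.
Proof.
move=> x y xS yS xy; apply: F2_sum1.
rewrite /edge_bit addrACA [weight y + _]addrC addrA.
exact: pair_relation.
Qed.

Lemma out_degree_F2 x : x \in S ->
  (#|out_nbrs beats S x|%:R : 'F_2) = 1 + \sum_(j in S) weight j.
Proof.
move=> xS.
have -> : out_nbrs beats S x = [set z in S :\ x | edge_bit x z == 1].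
  by apply/setP => z; rewrite !inE andbCA andbA.
rewrite card_ones.
have : \sum_(z in S) edge_bit x z = weight x + \sum_(j in S) weight j.
  exact: big_split.
rewrite (big_setD1 x xS) /edge_bit coef_diag => sumS.
by apply: (addrI (1 + weight x)); rewrite sumS addrACA addF2K add0r.
Qed.

(* Along a 3-cycle, column [x] restricted to the cycle has first coordinate
   a_xx + a_yx + a_zx = 1 + (0 + w_x) + (1 + w_x) = 0. *)
Lemma col_triangle x y z : x \in S -> y \in S -> z \in S ->
  x != y -> y != z -> z != x -> beats x y -> beats z x ->
  \sum_(i in [set x; y; z]) coef i x = 0.
Proof.
move=> xS yS zS xy yz zx rxy rzx.
have nryx : ~~ beats y x by rewrite (beats_tournament yS xS) ?rxy // eq_sym.
have eyx : edge_bit y x = 0.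
  by move: nryx; rewrite /beats; case: (F2_cases (edge_bit y x)) => ->.
have x_yz : x \notin [set y; z] by rewrite !inE negb_or xy eq_sym zx.
have y_z : y \notin [set z] by rewrite inE.
rewrite -setUA big_setU1 // big_setU1 // big_set1 /=.
by rewrite coef_diag !(coef_edge _ x) eyx (eqP rzx) add0r addrA (addF2K (1 + _)).
Qed.

Lemma JM_triangle x y z : x \in S -> y \in S -> z \in S ->
  x != y -> y != z -> z != x -> beats x y -> beats y z -> beats z x ->
  JM M [set x; y; z] = set0.
Proof.
move=> xS yS zS xy yz zx rxy ryz rzx; set U := [set x; y; z].
apply/setP => j; rewrite in_JM inE.
have := cardsD1 j U; rewrite card_set3 //.
case: (boolP (j \in U)) => jU; last by rewrite add0n => <-; rewrite andbF.
suff -> : \sum_(i in U) coef i j = 0 by [].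
move: jU; rewrite !inE -orbA => /or3P [] /eqP ->.
- exact: col_triangle.
- by rewrite /U set3_rot set3_rot; apply: col_triangle.
- by rewrite /U set3_rot; apply: col_triangle.
Qed.

End SpinSets.

Theorem mainTheorem17 (n : nat) (M : 'M[K4]_n) :
  (5 <= n)%N -> odd n -> is_HW M ->
  ~ (exists S : {set 'I_n}, spinc_set M S /\ #|S| = (n - 2)%N).
Proof.
move=> n5 _ [M_diag M_offdiag _ JM_nonempty] [S [spinS cardS]].
have : ~~ triangle_free (beats M S) S.
  apply: triangle_of_parity (beats_tournament M_diag M_offdiag spinS) _ _.
    by rewrite cardS; lia.
  by move=> x y xS yS; apply: odd_F2; rewrite !out_degree_F2.
case/forall_inPn => x xS /forall_inPn [y yS /forall_inPn [z zS]].
rewrite negbK => /and4P [xy yz zx /and3P [rxy ryz rzx]].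
suff : JM M [set x; y; z] != set0.
  by rewrite (JM_triangle M_diag M_offdiag spinS) ?eqxx.
apply: JM_nonempty.
- by apply/set0Pn; exists x; rewrite !inE eqxx.
- apply: contraTneq n5 => U_T.
  by rewrite -ltnNge -(card_ord n) -cardsT -U_T card_set3.
Qed.
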